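(* Let $(\Omega,\mathcal{F},\mathbb{P})$ be a nonatomic probability space and let $(\mathcal{X},\mathcal{X}^\ast)$ be a pair of law-invariant vector subspaces of $L^1$, each containing $L^\infty$, such that $XY\in L^1$ for all $X\in\mathcal{X}$ and $Y\in\mathcal{X}^\ast$. Let $\varphi:\mathcal{X}\to(-\infty,\infty]$ be proper, convex and $\sigma(\mathcal{X},\mathcal{X}^\ast)$-lower semicontinuous, and let $\mathcal{S}\subset\mathcal{X}$ be such that $\mathrm{span}(\mathcal{S})$ is $\sigma(\mathcal{X},\mathcal{X}^\ast)$-dense in $\mathcal{X}$. If $\varphi$ is affine along every element of $\mathcal{S}$, then $\varphi$ is affine on $\mathcal{X}$ and there exists a unique $Y\in\mathcal{X}^\ast$ such that $\varphi(X)=\mathbb{E}_{\mathbb{P}}[XY]+\varphi(0)$ for every $X\in\mathcal{X}$.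
   Context: $L^0$ denotes the space of real random variables on $(\Omega,\mathcal{F},\mathbb{P})$ modulo almost-sure equality. For $X,Y\in L^0$, $X\sim Y$ means same law under $\mathbb{P}$; a set $\mathcal{S}\subset L^0$ is law invariant if $X\in\mathcal{S}$ whenever $X\in L^0$ and $X\sim Y$ for some $Y\in\mathcal{S}$. $\sigma(\mathcal{X},\mathcal{X}^\ast)$ is the weakest linear topology on $\mathcal{X}$ for which $X\mapsto\mathbb{E}_{\mathbb{P}}[XY]$ is continuous for every $Y\in\mathcal{X}^\ast$. $\mathrm{span}(\mathcal{S})$ is the smallest linear subspace containing $\mathcal{S}$. For $\varphi:\mathcal{X}\to(-\infty,\infty]$: $\mathrm{dom}(\varphi)=\{X:\varphi(X)<\infty\}$; proper means $\mathrm{dom}(\varphi)\neq\emptyset$; $\sigma(\mathcal{X},\mathcal{X}^\ast)$-lower semicontinuous means $\varphi(X)\le\liminf_\alpha\varphi(X_\alpha)$ for every net $X_\alpha\to X$ in $\sigma(\mathcal{X},\mathcal{X}^\ast)$. $\varphi$ is affine along an element $Z$ if $mZ\in\mathrm{dom}(\varphi)$ for all $m\in\mathbb{R}$ and $m\mapsto\varphi(mZ)-\varphi(0)$ is linear, i.e. $\varphi(mZ)=am+\varphi(0)$ for some $a\in\mathbb{R}$; $\varphi$ is affine on $\mathcal{X}$ if $\varphi$ is finite on $\mathcal{X}$ and $X\mapsto\varphi(X)-\varphi(0)$ is linear on $\mathcal{X}$. *)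

From HB Require Import structures.
From mathcomp Require Import all_boot all_order all_algebra.
From mathcomp Require Import all_classical all_reals all_analysis.
Set Implicit Arguments. Unset Strict Implicit. Unset Printing Implicit Defensive.
Import Order.TTheory GRing.Theory Num.Theory.
Local Open Scope classical_set_scope.
Local Open Scope ring_scope.

(* Random variables are represented by functions T -> R; an element of L^0 is
   a measurable function, and all notions below are invariant under a.s.
   equality (sets are law invariant, hence closed under a.s. equality). *)

Section Defs.
Context {d : measure_display} {T : measurableType d} {R : realType}.
Variable P : probability T R.

Definition L0 (X : T -> R) : Prop := measurable_fun setT X.

Definition L1 (X : T -> R) : Prop :=
  measurable_fun setT X /\ P.-integrable setT (EFin \o X).

Definition Linf (X : T -> R) : Prop :=
  measurable_fun setT X /\ exists M : R, {ae P, forall t, `|X t| <= M}.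

(* expectation (real-valued; meaningful for integrable functions) *)
Definition Ex (X : T -> R) : R := fine (\int[P]_t (X t)%:E).

Definition as_eq (X Y : T -> R) : Prop := {ae P, forall t, X t = Y t}.

Definition same_law (X Y : T -> R) : Prop :=
  forall B : set R, measurable B -> P (X @^-1` B) = P (Y @^-1` B).

Definition law_invariant (S : set (T -> R)) : Prop :=
  forall X Y, L0 X -> S Y -> same_law X Y -> S X.

Definition nonatomic : Prop :=
  forall A : set T, measurable A -> (0 < P A)%E ->
    exists2 B : set T, measurable B &
      [/\ B `<=` A, (0 < P B)%E & (P B < P A)%E].

Definition vector_subspace (S : set (T -> R)) : Prop :=
  [/\ S (fun=> 0),
      (forall X Y, S X -> S Y -> S (fun t => X t + Y t)) &
      (forall (a : R) X, S X -> S (fun t => a * X t))].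

Inductive lin_span (S : set (T -> R)) : (T -> R) -> Prop :=
| lin_span0 : lin_span S (fun=> 0)
| lin_span_lin : forall (a : R) X Z, S X -> lin_span S Z ->
    lin_span S (fun t => a * X t + Z t).

End Defs.

Definition directed (I : Type) (le : I -> I -> Prop) : Prop :=
  [/\ inhabited I, (forall i, le i i),
      (forall i j k, le i j -> le j k -> le i k) &
      (forall i j, exists k, le i k /\ le j k)].

Definition net_cvg {R : realType} (I : Type) (le : I -> I -> Prop)
  (u : I -> R) (l : R) : Prop :=
  forall e : R, 0 < e -> exists i0, forall i, le i0 i -> `|u i - l| < e.

Definition net_liminf {R : realType} (I : Type) (le : I -> I -> Prop)
  (u : I -> \bar R) : \bar R :=
  ereal_sup (range (fun i => ereal_inf (u @` (le i)))).

Section Defs2.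
Context {d : measure_display} {T : measurableType d} {R : realType}.
Variable P : probability T R.

Definition weak_net_cvg (Xs : set (T -> R)) (I : Type) (le : I -> I -> Prop)
  (x : I -> (T -> R)) (X : T -> R) : Prop :=
  forall Y, Xs Y -> net_cvg le (fun i => Ex P (fun t => x i t * Y t))
                                (Ex P (fun t => X t * Y t)).

Definition weak_lsc (X Xs : set (T -> R)) (phi : (T -> R) -> \bar R) : Prop :=
  forall (I : Type) (le : I -> I -> Prop) (x : I -> (T -> R)) (Z : T -> R),
    directed le -> (forall i, X (x i)) -> X Z ->
    weak_net_cvg Xs le x Z -> (phi Z <= net_liminf le (fun i => phi (x i)))%E.

Definition weak_dense (X Xs : set (T -> R)) (D : set (T -> R)) : Prop :=
  forall Z, X Z -> exists (I : Type) (le : I -> I -> Prop) (x : I -> (T -> R)),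
    [/\ directed le, (forall i, D (x i)) & weak_net_cvg Xs le x Z].

(* phi : X -> (-oo, +oo], respecting a.s. equality (phi is defined on classes) *)
Definition functional_on (X : set (T -> R)) (phi : (T -> R) -> \bar R) : Prop :=
  (forall Z, X Z -> phi Z != -oo%E) /\
  (forall Z Z', X Z -> X Z' -> as_eq P Z Z' -> phi Z = phi Z').

Definition proper_on (X : set (T -> R)) (phi : (T -> R) -> \bar R) : Prop :=
  exists2 Z, X Z & (phi Z < +oo)%E.

Definition convex_on (X : set (T -> R)) (phi : (T -> R) -> \bar R) : Prop :=
  forall Z Z' (l : R), X Z -> X Z' -> 0 <= l <= 1 ->
    (phi (fun t => (l * Z t + (1 - l) * Z' t)%R)
       <= l%:E * phi Z + (1 - l)%R%:E * phi Z')%E.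

Definition affine_along (phi : (T -> R) -> \bar R) (Z : T -> R) : Prop :=
  (forall m : R, (phi (fun t => (m * Z t)%R) < +oo)%E) /\
  exists a : R, forall m : R, phi (fun t => (m * Z t)%R) = ((a * m)%R%:E + phi (fun=> 0%R))%E.

Definition affine_on (X : set (T -> R)) (phi : (T -> R) -> \bar R) : Prop :=
  (forall Z, X Z -> phi Z \is a fin_num) /\
  (forall Z Z' (a b : R), X Z -> X Z' ->
     fine (phi (fun t => a * Z t + b * Z' t)) - fine (phi (fun=> 0)) =
     a * (fine (phi Z) - fine (phi (fun=> 0)))
     + b * (fine (phi Z') - fine (phi (fun=> 0)))).

End Defs2.

From HB Require Import structures.
From mathcomp Require Import all_boot all_order all_algebra.
From mathcomp Require Import all_classical all_reals all_analysis.
From mathcomp Require Import ring lra.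
Set Implicit Arguments. Unset Strict Implicit. Unset Printing Implicit Defensive.
Import Order.TTheory GRing.Theory Num.Theory.
Local Open Scope classical_set_scope.
Local Open Scope ring_scope.

(* Convexity makes phi affine along every combination of two directions along
   which it is affine: the combination's values are bounded above by
   convexity, and below by convexity at 0, the midpoint of m x and -m x. So phi
   is affine on span(S), with linear part L. Lower semicontinuity at 0 makes L
   bounded below on a basic weak neighbourhood of 0, given by finitely many
   Y_i; hence L vanishes on the common kernel of the functionals E[. Y_i] and
   is E[. Y] for a combination Y of the Y_i. Density and lower semicontinuity
   give phi <= E[. Y] + phi(0) on X, and the midpoint argument again upgrades
   this to equality. Y is unique since a difference of representatives is
   orthogonal to L^oo. *)

Section LinearOn.
Variables (K : fieldType) (U : lmodType K).

Definition lin_closed (V : U -> Prop) :=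
  V 0 /\ forall a x z, V x -> V z -> V (a *: x + z).

Definition linear_on (V : U -> Prop) (f : U -> K) :=
  forall a x z, V x -> V z -> f (a *: x + z) = a * f x + f z.

Lemma lin_closedZ V a x : lin_closed V -> V x -> V (a *: x).
Proof. by move=> [V0 Vc] Vx; rewrite -[a *: x]addr0; apply: Vc. Qed.

Lemma linear_on0 V f : V 0 -> linear_on V f -> f 0 = 0.
Proof.
move=> V0 fV; have := fV 1 0 0 V0 V0; rewrite scale1r addr0 mul1r => h.
by apply: (addrI (f 0)); rewrite addr0 -h.
Qed.

Lemma linear_onZ V f a x : lin_closed V -> linear_on V f -> V x ->
  f (a *: x) = a * f x.
Proof.
move=> [V0 Vc] fV Vx.
by rewrite -[a *: x]addr0 fV // (linear_on0 V0 fV) addr0.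
Qed.

Lemma linear_on_proportional V f g : lin_closed V ->
  linear_on V f -> linear_on V g -> (forall x, V x -> f x = 0 -> g x = 0) ->
  exists c, forall x, V x -> g x = c * f x.
Proof.
move=> [V0 Vc] fV gV gker.
have [[v Vv fv0]|f0] := pselect (exists2 v, V v & f v != 0); last first.
  exists 0 => x Vx; rewrite mul0r; apply: gker => //.
  by apply/eqP/negPn/negP => fx0; apply: f0; exists x.
exists (g v / f v) => x Vx.
pose k := - (f x / f v).
have : g (k *: v + x) = 0.
  by apply: gker; [exact: Vc | rewrite fV // /k mulNr divfK // addNr].
rewrite gV // /k => h.
by apply/eqP; rewrite -subr_eq0 -h; apply/eqP; field.
Qed.

Lemma linear_on_comb_of_ker n V (fs : nat -> U -> K) (l : U -> K) :
  lin_closed V -> (forall i, linear_on V (fs i)) -> linear_on V l ->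
  (forall x, V x -> (forall i, (i < n)%N -> fs i x = 0) -> l x = 0) ->
  exists c : nat -> K, forall x, V x -> l x = \sum_(i < n) c i * fs i x.
Proof.
elim: n V l => [|n IH] V l Vlin fsV lV lker.
  by exists (fun=> 0) => x Vx; rewrite big_ord0; apply: lker.
have [V0 Vc] := Vlin.
pose V' x := V x /\ fs n x = 0.
have V'lin : lin_closed V'.
  split; first by split; last exact: linear_on0 (fsV n).
  by move=> a x z [Vx fx] [Vz fz]; split; [apply: Vc | rewrite fsV // fx fz mulr0 addr0].
have onV' f : linear_on V f -> linear_on V' f.
  by move=> fV a x z [Vx _] [Vz _]; apply: fV.
have [c lc] : exists c : nat -> K, forall x, V' x -> l x = \sum_(i < n) c i * fs i x.
  apply: IH => //; [by move=> i; apply: onV' | exact: onV' |].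
  move=> x [Vx fnx] fx; apply: lker => // i.
  by rewrite ltnS leq_eqVlt => /orP[/eqP -> //|]; apply: fx.
pose g x := l x - \sum_(i < n) c i * fs i x.
have gV : linear_on V g.
  move=> a x z Vx Vz; rewrite /g lV //.
  under eq_bigr => i _ do rewrite fsV // mulrDr mulrCA.
  by rewrite big_split /= -mulr_sumr; ring.
have [cn gcn] : exists cn, forall x, V x -> g x = cn * fs n x.
  by apply: linear_on_proportional => // x Vx fnx; rewrite /g (lc x) ?subrr.
exists (fun i => if i == n then cn else c i) => x Vx.
rewrite big_ord_recr /= eqxx -gcn // /g.
under eq_bigr => i _ do rewrite ltn_eqF //.
by rewrite addrC subrK.
Qed.

End LinearOn.

Section Expectation.
Context {d : measure_display} {T : measurableType d} {R : realType}.
Variable P : probability T R.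

Local Notation integrable f := (P.-integrable setT (EFin \o f)).

Lemma Ex0 : Ex P (fun=> 0) = 0.
Proof. by rewrite /Ex integral0. Qed.

Lemma ExZ (f : T -> R) (a : R) : integrable f ->
  Ex P (fun t => a * f t) = a * Ex P f.
Proof.
move=> If; rewrite /Ex.
under eq_integral do rewrite EFinM.
by rewrite integralZl // fineM // integrable_fin_num.
Qed.

Lemma ExN (f : T -> R) : integrable f -> Ex P (fun t => - f t) = - Ex P f.
Proof.
move=> If; rewrite -mulN1r -ExZ //.
by congr Ex; apply: funext => t; rewrite mulN1r.
Qed.

Lemma integrableZ (f : T -> R) (a : R) : integrable f ->
  integrable (fun t => a * f t).
Proof.
have -> : EFin \o (fun t => a * f t) = (fun t => a%:E * (EFin \o f) t)%E.
  by apply: funext => t; rewrite /= EFinM.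
exact: integrableZl.
Qed.

Lemma ExZD (f g : T -> R) (a : R) : integrable f -> integrable g ->
  Ex P (fun t => a * f t + g t) = a * Ex P f + Ex P g.
Proof.
move=> If Ig; rewrite -ExZ // /Ex.
have Iaf := integrableZ a If.
under eq_integral do rewrite EFinD.
by rewrite integralD // fineD // integrable_fin_num.
Qed.

Lemma Ex_sum (I : Type) (s : seq I) (h : I -> T -> R) :
  (forall i, integrable (h i)) ->
  Ex P (fun t => \sum_(i <- s) h i t) = \sum_(i <- s) Ex P (h i).
Proof.
move=> Ih; rewrite /Ex.
under eq_integral do rewrite -sumEFin.
rewrite integral_sum // sum_fine // => i _.
by apply: integrable_fin_num => //; exact: Ih.
Qed.

(* Test against the sign of [W]. *)
Lemma orthogonal_Linf_ae0 (W : T -> R) : L1 P W ->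
  (forall Z, Linf P Z -> Ex P (fun t => Z t * W t) = 0) -> as_eq P W (fun=> 0).
Proof.
move=> [mW iW] orthW.
pose Z t : R := if 0 <= W t then 1 else -1.
have LZ : Linf P Z.
  split; first by apply: measurable_fun_ifT => //;
    exact: measurable_realfun.measurable_fun_ler.
  by exists 1; apply: aeW => t; rewrite /Z; case: ifP; rewrite ?normrN normr1.
have ZW : (fun t => Z t * W t) = (fun t => `|W t|).
  apply: funext => t; rewrite /Z; case: ifPn => [W0|].
    by rewrite mul1r ger0_norm.
  by rewrite -ltNge mulN1r => /ltr0_norm ->.
have iA : integrable (fun t => `|W t|) by exact: integrable_norm.
have int0 : (\int[P]_t (`|W t|)%:E = 0)%E.
  have := orthW Z LZ; rewrite ZW /Ex => h0.
  by have := fineK (integrable_fin_num measurableT iA); rewrite h0 => <-.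
have mW' := (measurable_realfun.measurable_EFinP _ _).2 mW.
apply: filterS ((ae_eq_integral_abs _ measurableT mW').1 int0) => t /= h.
exact: EFin_inj (h I).
Qed.

End Expectation.

Section Subspaces.
Context {d : measure_display} {T : measurableType d} {R : realType}.
Implicit Types (X S : set (T -> R)) (x z : T -> R).

Lemma vector_subspace_comb X a x z : vector_subspace X -> X x -> X z ->
  X (fun t => a * x t + z t).
Proof. by move=> [_ XD XZ] Xx Xz; apply: (XD (fun t => a * x t)) => //; apply: XZ. Qed.

Lemma vector_subspace_sum X (G : nat -> T -> R) (c : nat -> R) n :
  vector_subspace X -> (forall i, X (G i)) -> X (fun t => \sum_(i < n) c i * G i t).
Proof.
move=> VX XG; elim: n => [|n IH].
  by under eq_fun do rewrite big_ord0; case: VX.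
under eq_fun do rewrite big_ord_recr /= addrC.
exact: vector_subspace_comb.
Qed.

Lemma lin_span_comb S a x z : lin_span S x -> lin_span S z ->
  lin_span S (fun t => a * x t + z t).
Proof.
move=> Sx; elim: Sx z => [|b s w Ss _ IH] z Sz.
  by under eq_fun do rewrite mulr0 add0r.
have -> : (fun t => a * (b * s t + w t) + z t) =
    (fun t => (a * b) * s t + (fun t => a * w t + z t) t).
  by apply: funext => t /=; ring.
by apply: lin_span_lin => //; apply: IH.
Qed.

Lemma lin_span_lin_closed S : lin_closed (lin_span S).
Proof. by split=> [|a x z]; [exact: lin_span0 | exact: lin_span_comb]. Qed.

Lemma lin_span_sub X S : vector_subspace X -> S `<=` X -> lin_span S `<=` X.
Proof.
move=> VX SX x; elim=> [|a s w Ss _ Xw]; first by case: VX.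
exact: vector_subspace_comb (SX _ Ss) Xw.
Qed.

End Subspaces.

Lemma net_liminf_le_cvg (R : realType) (I : Type) (le : I -> I -> Prop)
    (u : I -> R) l :
  directed le -> net_cvg le u l -> (net_liminf le (fun i => (u i)%:E) <= l%:E)%E.
Proof.
move=> [_ _ _ dir] ul; apply/lee_addgt0Pr => e e0.
apply: ge_ereal_sup => _ [i _ <-].
have [i0 Hi0] := ul e e0; have [k [ik i0k]] := dir i i0.
apply: (@le_trans _ _ (u k)%:E); first by apply: ereal_inf_lbound; exists k.
by rewrite -EFinD lee_fin; have := Hi0 k i0k; rewrite ltr_norml => /andP[_]; lra.
Qed.

Lemma net_liminf_le_ub (R : realType) (I : Type) (le : I -> I -> Prop)
    (v : I -> \bar R) c :
  (forall i, le i i) -> (forall i, (v i <= c)%E) -> (net_liminf le v <= c)%E.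
Proof.
move=> refl vc; apply: ge_ereal_sup => _ [i _ <-].
by apply: le_trans (vc i); apply: ereal_inf_lbound; exists i.
Qed.

Section ConvexAffine.
Context {d : measure_display} {T : measurableType d} {R : realType}.
Variables (X : set (T -> R)) (phi : (T -> R) -> \bar R) (p0 : R).
Hypotheses (VX : vector_subspace X) (phiNy : forall Z, X Z -> phi Z != -oo%E).
Hypotheses (cvx : convex_on X phi) (phi0 : phi (fun=> 0) = p0%:E).

Definition has_slope (x : T -> R) (a : R) :=
  forall m : R, phi (fun t => m * x t) = (a * m + p0)%:E.

Definition phi_lin (x : T -> R) : R := fine (phi x) - p0.

Lemma half_01 : (0 <= (2^-1 : R) <= 1). Proof. by apply/andP; split; lra. Qed.

(* [0] is the midpoint of [x] and [-x], so [p0 <= (phi x + phi (-x)) / 2]. *)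
Lemma convex_eq_of_odd_upper_bound x a : X x ->
  (phi x <= (a + p0)%:E)%E -> (phi (fun t => (- x t)%R) <= (- a + p0)%:E)%E ->
  phi x = (a + p0)%:E.
Proof.
move=> Xx le_x le_Nx.
have XNx : X (fun t => - x t).
  by case: VX => _ _ XZ; under eq_fun do rewrite -mulN1r; exact: XZ.
have := cvx Xx XNx half_01.
have -> : (fun t => 2^-1 * x t + (1 - 2^-1) * - x t) = (fun=> 0) :> (T -> R).
  by apply: funext => t; field.
rewrite phi0.
move: (phiNy Xx) (phiNy XNx) le_x le_Nx.
case: (phi x) => [r| |] //; case: (phi (fun t => - x t)) => [s| |] // _ _.
rewrite -!EFinM -EFinD !lee_fin => r_le s_le mid.
by congr EFin; apply/eqP; rewrite eq_le r_le /=; lra.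
Qed.

Lemma has_slope_comb b x z al be : X x -> X z ->
  has_slope x al -> has_slope z be ->
  has_slope (fun t => b * x t + z t) (b * al + be).
Proof.
move=> Xx Xz x_al z_be.
have [_ _ XZ] := VX.
have le_m (m : R) :
    (phi (fun t => (m * (b * x t + z t))%R) <= ((b * al + be) * m + p0)%:E)%E.
  have -> : (fun t => m * (b * x t + z t)) =
      (fun t => 2^-1 * ((2 * m * b) * x t) + (1 - 2^-1) * ((2 * m) * z t)).
    by apply: funext => t; field.
  apply: le_trans (cvx (XZ _ _ Xx) (XZ _ _ Xz) half_01) _.
  rewrite x_al z_be -!EFinM -EFinD lee_fin le_eqVlt.
  by apply/orP; left; apply/eqP; field.
move=> m; apply: convex_eq_of_odd_upper_bound.
- by apply: XZ; exact: vector_subspace_comb.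
- exact: le_m.
- under eq_fun do rewrite -mulNr.
  by rewrite -mulrN; exact: le_m.
Qed.

Lemma has_slope1 x a : has_slope x a -> phi x = (a + p0)%:E.
Proof. by move=> /(_ 1); rewrite mulr1; under eq_fun do rewrite mul1r. Qed.

Lemma has_slope_phi_lin x a : has_slope x a -> phi_lin x = a.
Proof. by move=> /has_slope1 phix; rewrite /phi_lin phix /= addrK. Qed.

Section Span.
Variable S : set (T -> R).
Hypotheses (SX : S `<=` X) (affS : forall s, S s -> affine_along phi s).

Lemma lin_span_has_slope x : lin_span S x -> exists a, has_slope x a.
Proof.
elim=> [|b s w Ss Sw [be w_be]].
  by exists 0 => m; rewrite mul0r add0r -phi0; under eq_fun do rewrite mulr0.
have [_ [a s_a]] := affS Ss.
exists (b * a + be); apply: has_slope_comb => //; first exact: SX.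
- exact: lin_span_sub Sw.
- by move=> m; rewrite s_a phi0.
Qed.

Lemma lin_span_phiE x : lin_span S x -> phi x = (phi_lin x + p0)%:E.
Proof.
by move=> /lin_span_has_slope[a x_a]; rewrite (has_slope_phi_lin x_a) (has_slope1 x_a).
Qed.

Lemma lin_span_linear_on : linear_on (lin_span S) phi_lin.
Proof.
move=> b x z Sx Sz.
have [al x_al] := lin_span_has_slope Sx; have [be z_be] := lin_span_has_slope Sz.
rewrite (has_slope_phi_lin x_al) (has_slope_phi_lin z_be).
have [Xx Xz] := (lin_span_sub VX SX Sx, lin_span_sub VX SX Sz).
exact: has_slope_phi_lin (has_slope_comb b Xx Xz x_al z_be).
Qed.

End Span.
End ConvexAffine.

Section WeakTopology.
Context {d : measure_display} {T : measurableType d} {R : realType}.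
Variables (P : probability T R) (Xs : set (T -> R)).

(* A basic weak neighbourhood of 0, of radius [1 / (k + 1)]; elements of [F]
   outside [Xs] are ignored. *)
Definition weak_nbhs0 (F : seq (T -> R)) (k : nat) (x : T -> R) :=
  forall Y, Y \in F -> Xs Y -> `|Ex P (fun t => x t * Y t)| < k.+1%:R^-1.

Definition nbhs0_le (i j : seq (T -> R) * nat) :=
  {subset i.1 <= j.1} /\ (i.2 <= j.2)%N.

Lemma directed_nbhs0_le : directed nbhs0_le.
Proof.
split=> [|i|i j k [ij1 ij2] [jk1 jk2]|i j].
- exact: inhabits ([::], 0%N).
- by split.
- by split=> [Y /ij1 /jk1 //|]; exact: leq_trans jk2.
- exists (i.1 ++ j.1, maxn i.2 j.2); split; split=> /=.
  + by move=> Y Yi; rewrite mem_cat Yi.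
  + exact: leq_maxl.
  + by move=> Y Yj; rewrite mem_cat Yj orbT.
  + exact: leq_maxr.
Qed.

Lemma weak_net_cvg0 (x : seq (T -> R) * nat -> T -> R) :
  (forall i, weak_nbhs0 i.1 i.2 (x i)) ->
  weak_net_cvg P Xs nbhs0_le x (fun=> 0).
Proof.
move=> x_nbhs Y XsY e e0.
exists ([:: Y], Num.truncn e^-1) => i [FY ki].
rewrite (_ : (fun t => 0 * Y t) = fun=> 0); last by apply: funext => t; rewrite mul0r.
rewrite Ex0 subr0; apply: lt_le_trans (x_nbhs i Y (FY Y (mem_head _ _)) XsY) _.
apply: (@le_trans _ _ (Num.truncn e^-1).+1%:R^-1).
  by rewrite lef_pV2 ?posrE ?ltr0n // ler_nat ltnS.
by rewrite invf_ple ?posrE ?ltr0n //; apply: ltW; exact: truncnS_gt.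
Qed.

Lemma weak_lsc_nbhs0 (X D : set (T -> R)) (phi : (T -> R) -> \bar R) (p0 : R) :
  weak_lsc P X Xs phi -> X (fun=> 0) -> phi (fun=> 0) = p0%:E -> D `<=` X ->
  exists F k, forall x, D x -> weak_nbhs0 F k x -> ((p0 - 1)%:E < phi x)%E.
Proof.
move=> lsc X0 phi0 DX; apply: contrapT => no_nbhs.
have pick (i : seq (T -> R) * nat) :
    exists x, [/\ D x, weak_nbhs0 i.1 i.2 x & (phi x <= (p0 - 1)%:E)%E].
  apply: contrapT => no_x; apply: no_nbhs; exists i.1, i.2 => x Dx x_nbhs.
  by rewrite ltNge; apply/negP => le_x; apply: no_x; exists x.
have [x x_spec] := choice pick.
have Xx i : X (x i) by have [Dx _ _] := x_spec i; exact: DX.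
have x_nbhs i : weak_nbhs0 i.1 i.2 (x i) by have [] := x_spec i.
have x_le i : (phi (x i) <= (p0 - 1)%:E)%E by have [] := x_spec i.
have [_ refl _ _] := directed_nbhs0_le.
have := lsc _ _ _ _ directed_nbhs0_le Xx X0 (weak_net_cvg0 x_nbhs).
move=> /le_trans /(_ (net_liminf_le_ub refl x_le)).
by rewrite phi0 lee_fin; lra.
Qed.

(* Bounded below on every line through 0 in the common kernel of the
   functionals defining the neighbourhood, [L] vanishes there. *)
Lemma linear_on_weak_repr (V : (T -> R) -> Prop) (L : (T -> R) -> R) F k :
  lin_closed V -> vector_subspace Xs ->
  (forall x Y, V x -> Xs Y -> P.-integrable setT (EFin \o (fun t => x t * Y t))) ->
  linear_on V L -> (forall x, V x -> weak_nbhs0 F k x -> -1 < L x) ->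
  exists2 Y, Xs Y & forall x, V x -> L x = Ex P (fun t => x t * Y t).
Proof.
move=> Vlin VXs Vint Llin L_bd.
pose G i : T -> R := if `[< Xs (nth 0 F i) >] then nth 0 F i else 0.
have XsG i : Xs (G i) by rewrite /G; case: asboolP => // _; case: VXs.
have GE Y : Y \in F -> Xs Y -> G (index Y F) = Y.
  by move=> FY XsY; rewrite /G nth_index //; case: asboolP.
pose fs i x := Ex P (fun t => x t * G i t).
have fsV i : linear_on V (fs i).
  move=> a x z Vx Vz; rewrite /fs -ExZD ?Vint //.
  by congr Ex; apply: funext => t; rewrite !fctE mulrDl mulrA.
have ker x : V x -> (forall i, (i < size F)%N -> fs i x = 0) -> L x = 0.
  move=> Vx fs_x.
  have L_bd' s : -1 < s * L x.
    rewrite -(linear_onZ _ Vlin Llin Vx); apply: L_bd; first exact: lin_closedZ.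
    move=> Y FY XsY; rewrite -(GE Y FY XsY).
    under eq_fun do rewrite fctE -mulrA.
    by rewrite ExZ ?Vint // [Ex _ _]fs_x ?index_mem // mulr0 normr0.
  apply/eqP/negPn/negP => L_x0.
  by have := L_bd' (-2 / L x); rewrite divfK //; lra.
have [c Lc] := linear_on_comb_of_ker (n := size F) Vlin fsV Llin ker.
exists (fun t => \sum_(i < size F) c i * G i t).
  exact: vector_subspace_sum VXs XsG.
move=> x Vx; rewrite Lc //.
have -> : (fun t => x t * \sum_(i < size F) c i * G i t) =
    (fun t => \sum_(i < size F) c i * (x t * G i t)).
  by apply: funext => t; rewrite mulr_sumr; apply: eq_bigr => i _; rewrite mulrCA.
rewrite Ex_sum => [|i]; last by apply: integrableZ; apply: Vint.
by apply: eq_bigr => i _; rewrite ExZ ?Vint.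
Qed.

End WeakTopology.

Section Representation.
Context {d : measure_display} {T : measurableType d} {R : realType}.
Variables (P : probability T R) (X Xs : set (T -> R)) (phi : (T -> R) -> \bar R).
Hypotheses (VX : vector_subspace X) (VXs : vector_subspace Xs).
Hypothesis XXs_int : forall Z Y, X Z -> Xs Y ->
  P.-integrable setT (EFin \o (fun t => Z t * Y t)).

Lemma Ex_orthogonal_of_weak_dense0 (D : set (T -> R)) Z Y :
  (forall x, D x -> x = fun=> 0) -> weak_dense P X Xs D -> X Z -> Xs Y ->
  Ex P (fun t => Z t * Y t) = 0.
Proof.
move=> D0 dense XZ XsY; have [I [le [x [[_ refl _ _] Dx x_cvg]]]] := dense Z XZ.
apply/eqP/negPn/negP => nz.
have [j /(_ j (refl j))] := x_cvg Y XsY _ (eqbRL (normr_gt0 _) nz).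
rewrite (D0 _ (Dx j)) (_ : (fun t => 0 * Y t) = fun=> 0) ?Ex0 ?sub0r ?normrN ?ltxx //.
by apply: funext => t; rewrite mul0r.
Qed.

Lemma le_Ex_of_weak_dense (D : set (T -> R)) Y p0 :
  weak_lsc P X Xs phi -> D `<=` X -> weak_dense P X Xs D -> Xs Y ->
  (forall x, D x -> phi x = (Ex P (fun t => x t * Y t) + p0)%:E) ->
  forall Z, X Z -> (phi Z <= (Ex P (fun t => Z t * Y t) + p0)%:E)%E.
Proof.
move=> lsc DX dense XsY phiD Z XZ.
have [I [le [x [dir Dx x_cvg]]]] := dense Z XZ.
apply: le_trans (lsc _ le x Z dir (fun i => DX _ (Dx i)) XZ x_cvg) _.
rewrite (_ : (fun i => phi (x i)) = fun i => (Ex P (fun t => x i t * Y t) + p0)%:E).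
  apply: net_liminf_le_cvg => // e e0; have [i0 x_e] := x_cvg Y XsY e e0.
  by exists i0 => i i0i; rewrite opprD addrACA subrr addr0; apply: x_e.
by apply: funext => i; apply: phiD.
Qed.

Lemma Ex_repr_of_le Y p0 :
  (forall Z, X Z -> phi Z != -oo%E) -> convex_on X phi ->
  phi (fun=> 0) = p0%:E -> Xs Y ->
  (forall Z, X Z -> (phi Z <= (Ex P (fun t => Z t * Y t) + p0)%:E)%E) ->
  forall Z, X Z -> phi Z = (Ex P (fun t => Z t * Y t) + p0)%:E.
Proof.
move=> phiNy cvx phi0 XsY phi_le Z XZ.
apply: (convex_eq_of_odd_upper_bound VX phiNy cvx phi0 XZ (phi_le Z XZ)).
have XNZ : X (fun t => - Z t).
  by case: VX => _ _ XZ'; under eq_fun do rewrite -mulN1r; exact: XZ'.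
rewrite -(ExN (XXs_int XZ XsY)).
under [F in Ex P F]eq_fun do rewrite -mulNr.
exact: phi_le.
Qed.

Lemma phi0_fin_num (S : set (T -> R)) :
  (forall Y, Linf P Y -> Xs Y) -> (forall Z, X Z -> L1 P Z) ->
  functional_on P X phi -> proper_on X phi -> weak_dense P X Xs (lin_span S) ->
  (forall s, S s -> affine_along phi s) -> phi (fun=> 0) \is a fin_num.
Proof.
move=> LinfXs XL1 [phiNy phi_ae] [Z0 XZ0 Z0_fin] dense affS.
have X0 : X (fun=> 0) by case: VX.
rewrite fin_numE phiNy //=.
have [[s Ss]|noS] := pselect (exists s, S s).
  have [/(_ 0) + _] := affS s Ss.
  by under eq_fun do rewrite mul0r; rewrite lt_neqAle => /andP[].
have span0 x : lin_span S x -> x = fun=> 0.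
  by elim=> // a s w Ss; case: noS; exists s.
have Z0_ae0 : as_eq P Z0 (fun=> 0).
  apply: orthogonal_Linf_ae0 => [|W LW]; first exact: XL1.
  under eq_fun do rewrite mulrC.
  exact: Ex_orthogonal_of_weak_dense0 span0 dense XZ0 (LinfXs _ LW).
by rewrite -(phi_ae _ _ XZ0 X0 Z0_ae0); move: Z0_fin; rewrite lt_neqAle => /andP[].
Qed.

Lemma affine_on_of_Ex_repr Y c : Xs Y ->
  (forall Z, X Z -> phi Z = (Ex P (fun t => Z t * Y t) + c)%:E) -> affine_on X phi.
Proof.
move=> XsY phiY; split=> [Z XZ|Z Z' a b XZ XZ']; first by rewrite phiY.
have [X0 _ XZ_] := VX.
have XbZ' := XZ_ b _ XZ'.
rewrite !phiY //; last exact: vector_subspace_comb.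
have -> : (fun t => (a * Z t + b * Z' t) * Y t) =
    (fun t => a * (Z t * Y t) + b * (Z' t * Y t)).
  by apply: funext => t; ring.
have [iZ iZ'] := (XXs_int XZ XsY, XXs_int XZ' XsY).
rewrite ExZD ?(ExZ b iZ') //; last exact: integrableZ.
rewrite (_ : (fun t => 0 * Y t) = fun=> 0) ?Ex0 /=; last first.
  by apply: funext => t; rewrite mul0r.
by ring.
Qed.

Lemma ae_eq_of_Ex_repr Y Y' c :
  (forall Y, Xs Y -> L1 P Y) -> (forall Z, Linf P Z -> X Z) -> Xs Y -> Xs Y' ->
  (forall Z, X Z -> phi Z = (Ex P (fun t => Z t * Y t) + c)%:E) ->
  (forall Z, X Z -> phi Z = (Ex P (fun t => Z t * Y' t) + c)%:E) ->
  as_eq P Y' Y.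
Proof.
move=> XsL1 LinfX XsY XsY' phiY phiY'.
have XsW : Xs (fun t => - 1 * Y t + Y' t) by exact: vector_subspace_comb.
have := orthogonal_Linf_ae0 (XsL1 _ XsW).
have orth Z : Linf P Z -> Ex P (fun t => Z t * (- 1 * Y t + Y' t)) = 0.
  move=> LZ; have XZ := LinfX _ LZ.
  have EY : Ex P (fun t => Z t * Y' t) = Ex P (fun t => Z t * Y t).
    by have := phiY' Z XZ; rewrite phiY // => -[]; lra.
  rewrite (_ : (fun t => _) = fun t => -1 * (Z t * Y t) + Z t * Y' t); last first.
    by apply: funext => t; ring.
  by rewrite ExZD ?XXs_int // EY mulN1r addNr.
move=> /(_ orth); apply: filterS => t /eqP.
by rewrite mulN1r addrC subr_eq0 => /eqP.
Qed.

End Representation.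

Theorem corollary3p6 (d : measure_display) (T : measurableType d)
  (R : realType) (P : probability T R)
  (X Xs : set (T -> R)) (phi : (T -> R) -> \bar R) (S : set (T -> R)) :
  nonatomic P ->
  vector_subspace X -> vector_subspace Xs ->
  law_invariant P X -> law_invariant P Xs ->
  (forall Z, X Z -> L1 P Z) -> (forall Y, Xs Y -> L1 P Y) ->
  (forall Z, Linf P Z -> X Z) -> (forall Y, Linf P Y -> Xs Y) ->
  (forall Z Y, X Z -> Xs Y -> L1 P (fun t => Z t * Y t)) ->
  functional_on P X phi -> proper_on X phi -> convex_on X phi ->
  weak_lsc P X Xs phi ->
  S `<=` X -> weak_dense P X Xs (lin_span S) ->
  (forall Z, S Z -> affine_along phi Z) ->
  affine_on X phi /\
  exists2 Y, Xs Y &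
    (forall Z, X Z ->
       phi Z = (Ex P (fun t => Z t * Y t) + fine (phi (fun=> 0)))%:E) /\
    (forall Y', Xs Y' ->
       (forall Z, X Z ->
          phi Z = (Ex P (fun t => Z t * Y' t) + fine (phi (fun=> 0)))%:E) ->
       as_eq P Y' Y).
Proof.
move=> _ VX VXs _ _ XL1 XsL1 LinfX LinfXs XXsL1 phi_fun phi_proper cvx lsc SX
  dense affS.
have XXs_int Z Y : X Z -> Xs Y -> P.-integrable setT (EFin \o (fun t => Z t * Y t)).
  by move=> XZ XsY; case: (XXsL1 Z Y XZ XsY).
have X0 : X (fun=> 0) by case: VX.
have phiNy := phi_fun.1.
set p0 := fine (phi (fun=> 0)).
have phi0 : phi (fun=> 0) = p0%:E.
  by rewrite fineK //; exact: phi0_fin_num phi_fun phi_proper dense affS.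
have spanX := lin_span_sub VX SX.
have phiE := lin_span_phiE VX phiNy cvx phi0 SX affS.
have [F [k near0]] := weak_lsc_nbhs0 lsc X0 phi0 spanX.
have [Y XsY phi_linY] : exists2 Y, Xs Y &
    forall x, lin_span S x -> phi_lin phi p0 x = Ex P (fun t => x t * Y t).
  apply: (linear_on_weak_repr (lin_span_lin_closed S) VXs _
    (lin_span_linear_on VX phiNy cvx phi0 SX affS)).
  - by move=> x Y Sx; apply: XXs_int; exact: spanX.
  - move=> x Sx /(near0 x Sx).
    by rewrite phiE // lte_fin; lra.
have phiS x : lin_span S x -> phi x = (Ex P (fun t => x t * Y t) + p0)%:E.
  by move=> Sx; rewrite phiE // phi_linY.
have phiY := Ex_repr_of_le VX XXs_int phiNy cvx phi0 XsY
  (le_Ex_of_weak_dense lsc spanX dense XsY phiS).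
split; first exact: affine_on_of_Ex_repr XsY phiY.
exists Y => //; split=> // Y' XsY' phiY'.
exact: ae_eq_of_Ex_repr XsL1 LinfX XsY XsY' phiY phiY'.
Qed.
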